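(* Let $\mathbf{u}$ be quasi-definite with SMOP $(P_n)$ and associated polynomials of the first kind $(P^{(1)}_n)$, let $c\in\mathbb{C}$ with $P_n(c)\ne0$ for all $n\ge0$, and let $\widetilde{\mathbf{u}}=(x-c)\mathbf{u}$ (which is then quasi-definite, with $\widetilde{\mathbf{u}}_0\neq0$), with SMOP $(\widetilde P_n)$ and associated polynomials of the first kind $(\widetilde P^{(1)}_n)$. Define $$R_n(x)=\frac{\mathbf{u}_0}{\widetilde{\mathbf{u}}_0}\Big[(x-c)P^{(1)}_n(x)-P_{n+1}(x)\Big],\quad n\ge-1 .$$ Then for every $n\ge1$, $$(x-c)\,\widetilde P^{(1)}_{n-1}(x)=R_n(x)-\frac{P_{n+1}(c)}{P_n(c)}\,R_{n-1}(x).$$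
   Context: Linear functionals on complex polynomials, moments $\mathbf{u}_n=\langle\mathbf{u},x^n\rangle$, $\langle(x-c)\mathbf{u},p\rangle=\langle\mathbf{u},(x-c)p\rangle$. Quasi-definite: all leading principal Hankel minors of the moments nonzero; a quasi-definite functional has a unique sequence of monic orthogonal polynomials (SMOP) $(P_n)$ with $xP_n=P_{n+1}+b_nP_n+a_nP_{n-1}$, $P_{-1}=0$, $P_0=1$, $a_n\neq0$. Associated polynomials of the first kind: monic, $xP^{(1)}_n=P^{(1)}_{n+1}+b_{n+1}P^{(1)}_n+a_{n+1}P^{(1)}_{n-1}$, $P^{(1)}_{-1}=0$, $P^{(1)}_0=1$; equivalently $P^{(1)}_{n-1}(x)=\frac{1}{\mathbf{u}_0}\langle\mathbf{u}_y,\frac{P_n(x)-P_n(y)}{x-y}\rangle$. The SMOP of $(x-c)\mathbf{u}$ is $\widetilde P_n(x)=\big(P_{n+1}(x)-\frac{P_{n+1}(c)}{P_n(c)}P_n(x)\big)/(x-c)$. *)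

From HB Require Import structures.
From mathcomp Require Import all_boot all_order all_algebra reals.
From mathcomp.real_closed Require Import complex.
Set Implicit Arguments. Unset Strict Implicit. Unset Printing Implicit Defensive.
Import Order.TTheory GRing.Theory Num.Theory.
Local Open Scope ring_scope.

(* A linear functional u on polynomials is represented by its moment sequence
   m : nat -> F, m n = <u, x^n>. *)
Definition lfun_app {F : fieldType} (m : nat -> F) (p : {poly F}) : F :=
  \sum_(i < size p) p`_i * m i.

(* moments of (x - c) u : <(x-c)u, x^n> = <u, x^(n+1)> - c <u, x^n> *)
Definition shift_mom {F : fieldType} (c : F) (m : nat -> F) : nat -> F :=
  fun n => m n.+1 - c * m n.

Definition quasi_definite {F : fieldType} (m : nat -> F) : Prop :=
  forall n : nat, \det (\matrix_(i < n.+1, j < n.+1) m (i + j)%N) != 0.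

Definition is_SMOP {F : fieldType} (m : nat -> F) (P : nat -> {poly F}) : Prop :=
  (forall n, P n \is monic) /\ (forall n, size (P n) = n.+1) /\
  (forall n k, k != n -> lfun_app m (P n * P k) = 0) /\
  (forall n, lfun_app m (P n * P n) != 0).

(* Associated polynomials of the first kind:
   P^(1)_n(x) = (1/u_0) <u_y, (P_{n+1}(x) - P_{n+1}(y)) / (x - y)>,
   using (x^k - y^k)/(x - y) = \sum_(j < k) x^j y^(k-1-j). *)
Definition assoc1 {F : fieldType} (m : nat -> F) (P : nat -> {poly F}) (n : nat)
  : {poly F} :=
  (m 0%N)^-1 *: \sum_(k < size (P n.+1))
      (P n.+1)`_k *: \sum_(j < k) (m (k.-1 - j)%N *: 'X^j).

From HB Require Import structures.
From mathcomp Require Import all_boot all_order all_algebra reals.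
From mathcomp.real_closed Require Import complex.
Set Implicit Arguments. Unset Strict Implicit. Unset Printing Implicit Defensive.
Import Order.TTheory GRing.Theory Num.Theory.
Local Open Scope ring_scope.

(* Every object in the statement is obtained by applying a
   linear map to polynomials: a functional with moments m is the extension
   p |-> sum_i p_i m_i, and the associated polynomial of the first kind of
   P_(n+1) is (1/u_0) times the extension of the "kernel" sequence
   K_k = <u_y, (x^k - y^k)/(x - y)> = sum_(j<k) u_(k-1-j) x^j.
   Two facts then drive the theorem:
   (1) Christoffel's formula  (x-c) Pt_n = P_(n+1) - (P_(n+1)(c)/P_n(c)) P_n,
       proved from orthogonality: the left side minus P_(n+1) has degree
       <= n and is u-orthogonal to P_0, ..., P_(n-1), hence is a multiple
       of P_n, and evaluating at c identifies the multiple;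
   (2) the kernel of (x-c)u satisfies K~_k = K_(k+1) - c K_k - u_0 x^k, so
       (x-c) times the numerator of the associated polynomial of T for (x-c)u
       equals the linear map Rem(Q) = (x-c) N(Q) - u_0 Q applied to (x-c)T.
   Since R_n = Rem(P_(n+1)) / u~_0, the theorem is (2) with T = Pt_(n-1),
   rewritten by (1) and the linearity of Rem. *)

Section LinearExtension.
Variables (F : fieldType) (V : lmodType F).

Definition lin_ext (f : nat -> V) (p : {poly F}) : V :=
  \sum_(i < size p) p`_i *: f i.

Lemma lin_extE (f : nat -> V) (p : {poly F}) (N : nat) : (size p <= N)%N ->
  lin_ext f p = \sum_(i < N) p`_i *: f i.
Proof.
move=> leN; rewrite /lin_ext -(subnKC leN) big_split_ord /=.
rewrite [X in _ + X]big1 ?addr0 // => i _.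
by rewrite nth_default ?scale0r // leq_addr.
Qed.

Fact lin_ext_is_linear (f : nat -> V) : linear (lin_ext f).
Proof.
move=> a p q; pose N := maxn (size (a *: p + q)) (maxn (size p) (size q)).
have leD : (size (a *: p + q)%R <= N)%N by rewrite leq_maxl.
have leP : (size p <= N)%N by rewrite !leq_max leqnn orbT.
have leQ : (size q <= N)%N by rewrite !leq_max leqnn !orbT.
rewrite (lin_extE f leD) (lin_extE f leP) (lin_extE f leQ).
rewrite scaler_sumr -big_split; apply: eq_bigr => i _.
by rewrite coefD coefZ scalerDl scalerA.
Qed.

HB.instance Definition _ (f : nat -> V) :=
  GRing.isLinear.Build F {poly F} V *:%R (lin_ext f) (lin_ext_is_linear f).

Lemma lin_extXn (f : nat -> V) (k : nat) : lin_ext f 'X^k = f k.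
Proof.
rewrite /lin_ext size_polyXn big_ord_recr /= coefXn eqxx scale1r big1 ?add0r //.
by move=> i _; rewrite coefXn ltn_eqF // scale0r.
Qed.

Lemma lin_ext_mulXsubC (f : nat -> V) (c : F) (p : {poly F}) :
  lin_ext f (('X - c%:P) * p) = lin_ext (fun i => f i.+1 - c *: f i) p.
Proof.
rewrite -[p in LHS]coefK poly_def mulr_sumr linear_sum; apply: eq_bigr => i _.
by rewrite -scalerAr linearZ mulrBl -exprS mul_polyC linearB linearZ /= !lin_extXn.
Qed.

End LinearExtension.

Lemma lfun_appE (F : fieldType) (m : nat -> F) :
  lfun_app m = lin_ext (m : nat -> F^o).
Proof. by []. Qed.

Lemma lfun_app_shift (F : fieldType) (m : nat -> F) (c : F) (p : {poly F}) :
  lfun_app (shift_mom c m) p = lfun_app m (('X - c%:P) * p).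
Proof. by rewrite !lfun_appE lin_ext_mulXsubC. Qed.

Section GradedBases.
Variable F : fieldType.

Lemma size_sub_monic (p q : {poly F}) (n : nat) :
  p \is monic -> q \is monic -> size p = n.+1 -> size q = n.+1 ->
  (size (p - q)%R <= n)%N.
Proof.
move=> /monicP lead_p /monicP lead_q size_p size_q.
apply/leq_sizeP => j; rewrite leq_eqVlt => /predU1P [<-|ltnj].
  have coef_lead (r : {poly F}) : size r = n.+1 -> r`_n = lead_coef r.
    by move=> size_r; rewrite lead_coefE size_r.
  by rewrite coefB !coef_lead // lead_p lead_q subrr.
by rewrite coefB !nth_default ?subrr ?size_p ?size_q.
Qed.

Lemma graded_basis (Q : nat -> {poly F}) : (forall k, size (Q k) = k.+1) ->
  forall (N : nat) (p : {poly F}), (size p <= N)%N ->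
  exists a : nat -> F, p = \sum_(k < N) a k *: Q k.
Proof.
move=> size_Q; elim=> [|N IHN] p le_p_N.
  exists (fun=> 0); rewrite big_ord0.
  by apply/eqP; rewrite -size_poly_eq0 -leqn0.
have lead_QN : lead_coef (Q N) != 0 by rewrite lead_coef_eq0 -size_poly_eq0 size_Q.
pose b := p`_N / lead_coef (Q N).
have le_rest : (size (p - b *: Q N)%R <= N)%N.
  apply/leq_sizeP => j; rewrite leq_eqVlt => /predU1P [<-|ltNj].
    rewrite coefB coefZ [(Q N)`_N](_ : _ = lead_coef (Q N)).
      by rewrite divfK ?subrr.
    by rewrite lead_coefE size_Q.
  by rewrite coefB coefZ !nth_default ?mulr0 ?subrr ?size_Q //; apply: leq_trans ltNj.
have [a def_rest] := IHN _ le_rest.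
exists (fun k => if k == N then b else a k).
rewrite big_ord_recr /= eqxx -[p](subrK (b *: Q N)) def_rest; congr (_ + _).
by apply: eq_bigr => i _; rewrite ltn_eqF.
Qed.

End GradedBases.

Section OrthogonalPolynomials.
Variables (F : fieldType) (m : nat -> F) (P : nat -> {poly F}).
Hypothesis smop_P : is_SMOP m P.

Lemma smop_orth (n : nat) (p : {poly F}) : (size p <= n)%N ->
  lfun_app m (P n * p) = 0.
Proof.
have [_ [size_P [orth_P _]]] := smop_P; move=> le_p_n.
have [a ->] := graded_basis size_P le_p_n.
rewrite mulr_sumr lfun_appE linear_sum big1 // => k _.
by rewrite -scalerAr linearZ /= -lfun_appE orth_P ?scaler0 // neq_ltn ltn_ord.
Qed.

(* A polynomial of degree <= n orthogonal to P_0, ..., P_(n-1) is a scalar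
   multiple of P_n (the norms <u, P_j^2> are nonzero). *)
Lemma smop_orth_multiple (n : nat) (p : {poly F}) : (size p <= n.+1)%N ->
  (forall j, (j < n)%N -> lfun_app m (p * P j) = 0) -> exists a, p = a *: P n.
Proof.
have [_ [size_P [orth_P norm_P]]] := smop_P; move=> le_p_n orth_p.
have [a def_p] := graded_basis size_P le_p_n.
have a_lower j : (j < n)%N -> a j = 0.
  move=> lt_j_n; have := orth_p j lt_j_n; rewrite def_p mulr_suml lfun_appE.
  rewrite linear_sum (bigD1 (Ordinal (leqW lt_j_n))) //= big1 => [|k ne_kj].
    rewrite addr0 -scalerAl linearZ /= -lfun_appE => /eqP.
    by rewrite mulf_eq0 (negbTE (norm_P j)) orbF => /eqP.
  rewrite -scalerAl linearZ /= -lfun_appE orth_P ?scaler0 //.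
  by apply: contra ne_kj => /eqP eq_kj; apply/eqP/val_inj.
exists (a n); rewrite def_p big_ord_recr /= big1 ?add0r // => k _.
by rewrite a_lower ?scale0r.
Qed.

End OrthogonalPolynomials.

Section Christoffel.
Variables (F : fieldType) (m : nat -> F) (P Pt : nat -> {poly F}) (c : F).
Hypotheses (smop_P : is_SMOP m P) (smop_Pt : is_SMOP (shift_mom c m) Pt).
Hypothesis P_c_neq0 : forall n, (P n).[c] != 0.

Lemma christoffel (n : nat) :
  ('X - c%:P) * Pt n = P n.+1 - ((P n.+1).[c] / (P n).[c]) *: P n.
Proof.
have [monic_P [size_P _]] := smop_P; have [monic_Pt [size_Pt _]] := smop_Pt.
set S := ('X - c%:P) * Pt n - P n.+1.
have size_S : (size S <= n.+1)%N.
  apply: size_sub_monic (monic_P _) _ (size_P _); first by rewrite monicMl ?monicXsubC.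
  by rewrite size_monicM ?monicXsubC ?monic_neq0 // size_XsubC size_Pt.
have orth_S j : (j < n)%N -> lfun_app m (S * P j) = 0.
  move=> lt_j_n; rewrite mulrBl lfun_appE linearB /= -!lfun_appE.
  rewrite -mulrA -lfun_app_shift (smop_orth smop_Pt) ?size_P //.
  by rewrite (smop_orth smop_P) ?size_P ?subrr // ltnW.
have [a def_S] := smop_orth_multiple smop_P size_S orth_S.
have S_c : S.[c] = - (P n.+1).[c].
  by rewrite /S hornerD hornerN hornerM hornerXsubC subrr mul0r add0r.
have -> : (P n.+1).[c] / (P n).[c] = - a.
  by rewrite -[(P n.+1).[c]]opprK -S_c def_S hornerZ mulNr mulfK.
by rewrite scaleNr opprK -def_S /S [RHS]addrC subrK.
Qed.

End Christoffel.

Section AssociatedPolynomials.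
Variable F : fieldType.

(* K_k = <u_y, (x^k - y^k)/(x - y)>; the associated polynomial of P_(n+1) is
   (1/u_0) lin_ext K P_(n+1), and lin_ext K Q is its numerator. *)
Definition assoc_kernel (m : nat -> F) (k : nat) : {poly F} :=
  \sum_(j < k) m (k.-1 - j)%N *: 'X^j.

Lemma assoc1E (m : nat -> F) (P : nat -> {poly F}) (n : nat) :
  assoc1 m P n = (m 0%N)^-1 *: lin_ext (assoc_kernel m) (P n.+1).
Proof. by []. Qed.

Lemma assoc_kernel_shift (m : nat -> F) (c : F) (k : nat) :
  assoc_kernel (shift_mom c m) k =
  assoc_kernel m k.+1 - c *: assoc_kernel m k - m 0%N *: 'X^k.
Proof.
rewrite /assoc_kernel big_ord_recr /= subnn [RHS]addrAC addrK scaler_sumr -sumrB.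
case: k => [|k]; first by rewrite !big_ord0.
apply: eq_bigr => j _ /=; rewrite /shift_mom scalerA -scalerBl.
by rewrite -subSn // -ltnS.
Qed.

Lemma assoc_numer_shift (m : nat -> F) (c : F) (T : {poly F}) :
  lin_ext (assoc_kernel (shift_mom c m)) T =
  lin_ext (assoc_kernel m) (('X - c%:P) * T) - m 0%N *: T.
Proof.
have -> : m 0%N *: T = \sum_(i < size T) T`_i *: (m 0%N *: 'X^i).
  rewrite -[T in LHS]coefK poly_def scaler_sumr.
  by apply: eq_bigr => i _; rewrite !scalerA mulrC.
rewrite lin_ext_mulXsubC /lin_ext -sumrB.
by apply: eq_bigr => i _; rewrite assoc_kernel_shift scalerBr.
Qed.

(* Rem(Q) = (x - c) N(Q) - u_0 Q; note R_n = Rem(P_(n+1)) / u~_0. *)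
Definition assoc_remainder (m : nat -> F) (c : F) (Q : {poly F}) : {poly F} :=
  ('X - c%:P) * lin_ext (assoc_kernel m) Q - m 0%N *: Q.

Lemma assoc_remainderB (m : nat -> F) (c a : F) (p q : {poly F}) :
  assoc_remainder m c (p - a *: q) =
  assoc_remainder m c p - a *: assoc_remainder m c q.
Proof.
rewrite /assoc_remainder linearB linearZ /= mulrBr -scalerAr.
rewrite !scalerBr !scalerA [m 0%N * a]mulrC.
rewrite opprB [in RHS]opprB addrACA [in RHS]addrACA.
by rewrite [X in _ + X = _]addrC.
Qed.

Lemma mulXsubC_assoc_numer_shift (m : nat -> F) (c : F) (T : {poly F}) :
  ('X - c%:P) * lin_ext (assoc_kernel (shift_mom c m)) T =
  assoc_remainder m c (('X - c%:P) * T).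
Proof. by rewrite assoc_numer_shift mulrBr -scalerAr. Qed.

End AssociatedPolynomials.

Theorem mainTheorem9 (R : realType) (m : nat -> R[i]) (P Pt : nat -> {poly R[i]})
  (c : R[i]) :
  quasi_definite m -> is_SMOP m P ->
  (forall n, (P n).[c] != 0) ->
  is_SMOP (shift_mom c m) Pt ->
  let Rn := fun n : nat =>
    (m 0%N / shift_mom c m 0%N) *: (('X - c%:P) * assoc1 m P n - P n.+1) in
  forall n : nat, (1 <= n)%N ->
    ('X - c%:P) * assoc1 (shift_mom c m) Pt n.-1 =
    Rn n - ((P n.+1).[c] / (P n).[c]) *: Rn n.-1.
Proof.
move=> quasi_def smop_P P_c_neq0 smop_Pt Rn [//|n] _ /=.
have m0_neq0 : m 0%N != 0 by have := quasi_def 0%N; rewrite det_mx11 mxE.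
set s := shift_mom c m 0%N.
have Rn_remainder k : Rn k = s^-1 *: assoc_remainder m c (P k.+1).
  rewrite /Rn assoc1E -scalerAr /assoc_remainder !scalerBr !scalerA.
  by rewrite mulrAC divff // mul1r [s^-1 * _]mulrC.
rewrite assoc1E -scalerAr mulXsubC_assoc_numer_shift (christoffel smop_P smop_Pt P_c_neq0).
by rewrite assoc_remainderB !Rn_remainder scalerBr !scalerA mulrC.
Qed.
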